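(* Let $\mathcal{K}$ be the convex set of real symmetric positive semi-definite $N\times N$ matrices $W$ with $\operatorname{Tr}W=N$, let $\mathbb{G}=\{G \text{ real symmetric } N\times N: G_{\mu\mu}=1,\ \mu=1,\ldots,N\}$, and let $\mathcal{G}=\mathbb{G}\cap\mathcal{K}$. For a closed face $\mathcal{F}$ of $\mathcal{G}$ let $\overline{\mathcal F}$ be the intersection of all faces of $\mathcal{K}$ containing $\mathcal F$. Then $\overline{\mathcal F}\cap\mathbb{G}=\mathcal{F}$ for every closed face $\mathcal{F}$ of $\mathcal{G}$.
   Context: A face of a convex set $C$ is a convex subset $F\subseteq C$ such that whenever $x\in F$, $y,z\in C$, $0<\alpha<1$ and $x=\alpha y+(1-\alpha)z$, then $y,z\in F$. *)

From HB Require Import structures.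
From mathcomp Require Import all_boot all_order all_algebra.
From mathcomp Require Import all_classical all_reals all_analysis.
Set Implicit Arguments. Unset Strict Implicit. Unset Printing Implicit Defensive.
Import Order.TTheory GRing.Theory Num.Theory.
Import numFieldTopology.Exports.
Local Open Scope classical_set_scope.
Local Open Scope ring_scope.

Definition mx_convex (R : realType) (N : nat) (C : set 'M[R]_N) : Prop :=
  forall x y, C x -> C y -> forall a : R, 0 <= a <= 1 ->
    C (a *: x + (1 - a) *: y).

Definition is_face (R : realType) (N : nat) (C F : set 'M[R]_N) : Prop :=
  [/\ F `<=` C, mx_convex F &
      forall x y z (a : R), F x -> C y -> C z -> 0 < a < 1 ->
        x = a *: y + (1 - a) *: z -> F y /\ F z].

Definition psd (R : realType) (N : nat) (W : 'M[R]_N) : Prop :=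
  W^T = W /\ forall v : 'cV[R]_N, 0 <= (v^T *m W *m v) ord0 ord0.

Definition calK (R : realType) (N : nat) : set 'M[R]_N :=
  [set W | psd W /\ \tr W = N%:R].

Definition bbG (R : realType) (N : nat) : set 'M[R]_N :=
  [set G | G^T = G /\ forall mu, G mu mu = 1].

Definition calG (R : realType) (N : nat) : set 'M[R]_N := @bbG R N `&` @calK R N.

Definition face_hull (R : realType) (N : nat) (F : set 'M[R]_N) : set 'M[R]_N :=
  [set W | forall F', @is_face R N (@calK R N) F' -> F `<=` F' -> F' W].

From HB Require Import structures.
From mathcomp Require Import all_boot all_order all_algebra.
From mathcomp Require Import all_classical all_reals all_analysis.
From mathcomp Require Import ring lra.
Set Implicit Arguments. Unset Strict Implicit. Unset Printing Implicit Defensive.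
Import Order.TTheory GRing.Theory Num.Theory.
Import numFieldTopology.Exports.
Local Open Scope classical_set_scope.
Local Open Scope ring_scope.

(* Take X in F of maximal rank. A positive combination of PSD matrices has
   the row spaces of both summands in its own, so comparing X with the midpoint
   of X and any Z in F shows rowspace Z <= rowspace X. The PSD trace-N matrices
   with row space inside that of X form a face of calK containing F, so every W
   in the face hull satisfies rowspace W <= rowspace X, i.e. W <= c X in the
   Loewner order. Then X - aW is PSD for small a > 0, so X is an interior point
   of a segment [W, Z] in calG, and since F is a face of calG, W lies in F. *)

Lemma quad_ge0_discr (R : realFieldType) (a b c : R) : 0 <= c ->
  (forall t, 0 <= a + 2 * t * b + t ^+ 2 * c) -> b ^+ 2 <= a * c.
Proof.
move=> c_ge0 quad_ge0; have [c0|c_neq0] := eqVneq c 0.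
  have [->|b_neq0] := eqVneq b 0; first by rewrite c0 expr0n mulr0.
  have := quad_ge0 (- (a + 1) / (2 * b)).
  have -> : 2 * (- (a + 1) / (2 * b)) * b = - (a + 1) by field.
  rewrite c0 mulr0; lra.
have := quad_ge0 (- b / c).
have -> : a + 2 * (- b / c) * b + (- b / c) ^+ 2 * c = (a * c - b ^+ 2) / c by field.
by rewrite pmulr_lge0 ?invr_gt0 ?lt0r ?c_neq0 // subr_ge0.
Qed.

Lemma mul_le_sq_bound (R : realDomainType) (x y m S : R) :
  x ^+ 2 <= S -> y ^+ 2 <= S -> x * m * y <= `|m| * S.
Proof.
move=> xS yS; rewrite (le_trans (ler_norm _)) // !normrM mulrAC mulrC ler_wpM2l //.
rewrite -[x ^+ 2]real_normK ?num_real // in xS.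
rewrite -[y ^+ 2]real_normK ?num_real // in yS.
have := sqr_ge0 (`|x| - `|y|); rewrite sqrrB; lra.
Qed.

Lemma exists_bounded_argmax T (f : T -> nat) (b : nat) (A : set T) :
  A !=set0 -> (forall x, A x -> (f x <= b)%N) ->
  exists2 x, A x & forall y, A y -> (f y <= f x)%N.
Proof.
move=> [x0 Ax0] f_le_b.
have exP : exists k, `[< exists2 x, A x & f x = k >].
  by exists (f x0); apply/asboolP; exists x0.
have ubP : forall k, `[< exists2 x, A x & f x = k >] -> (k <= b)%N.
  by move=> k /asboolP[x Ax <-]; exact: f_le_b.
case: (ex_maxnP exP ubP) => k /asboolP[x Ax fx_k] k_max.
by exists x => // y Ay; rewrite fx_k; apply: k_max; apply/asboolP; exists y.
Qed.

Lemma submx_kerP (F : fieldType) m1 m2 n (A : 'M[F]_(m1, n)) (B : 'M[F]_(m2, n)) :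
  reflect (forall v : 'cV_n, A *m v = 0 -> B *m v = 0) (B <= A)%MS.
Proof.
apply: (iffP idP) => [/submxP[D ->] v Av0|kerAB]; first by rewrite -mulmxA Av0 mulmx0.
have colB0 j : B *m col j (cokermx A) = 0.
  by apply: kerAB; rewrite colE mulmxA mulmx_coker mul0mx.
rewrite submxE; apply/eqP/matrixP => i j.
have := congr1 (fun v : 'cV[F]_m2 => v i 0) (colB0 j).
by rewrite colE mulmxA -colE !mxE.
Qed.

Section MxForm.
Variables (R : comPzRingType) (n : nat).
Implicit Types (A B M X : 'M[R]_n) (u v : 'cV[R]_n).

Definition mxform M u v : R := (u^T *m M *m v) ord0 ord0.

Definition sqnorm u : R := (u^T *m u) ord0 ord0.

Lemma mxformDl M u1 u2 v : mxform M (u1 + u2) v = mxform M u1 v + mxform M u2 v.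
Proof. by rewrite /mxform linearD !mulmxDl mxE. Qed.

Lemma mxformZl M a u v : mxform M (a *: u) v = a * mxform M u v.
Proof. by rewrite /mxform linearZ -!scalemxAl mxE. Qed.

Lemma mxformDr M u v1 v2 : mxform M u (v1 + v2) = mxform M u v1 + mxform M u v2.
Proof. by rewrite /mxform mulmxDr mxE. Qed.

Lemma mxformZr M a u v : mxform M u (a *: v) = a * mxform M u v.
Proof. by rewrite /mxform -scalemxAr mxE. Qed.

Lemma mxformD M1 M2 u v : mxform (M1 + M2) u v = mxform M1 u v + mxform M2 u v.
Proof. by rewrite /mxform mulmxDr mulmxDl mxE. Qed.

Lemma mxformZ a M u v : mxform (a *: M) u v = a * mxform M u v.
Proof. by rewrite /mxform -scalemxAr -scalemxAl mxE. Qed.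

Lemma mxformN M u v : mxform (- M) u v = - mxform M u v.
Proof. by rewrite -scaleN1r mxformZ mulN1r. Qed.

Lemma mxform_sym M u v : M^T = M -> mxform M u v = mxform M v u.
Proof.
have trE (C : 'M[R]_1) : C ord0 ord0 = C^T ord0 ord0 by rewrite mxE.
by move=> sM; rewrite /mxform trE !trmx_mul trmxK sM mulmxA.
Qed.

Lemma mxform_mulmx A M B u v : mxform (A^T *m M *m B) u v = mxform M (A *m u) (B *m v).
Proof. by rewrite /mxform !trmx_mul !mulmxA. Qed.

Lemma mxformE M u v : mxform M u v = \sum_j \sum_i u i ord0 * M i j * v j ord0.
Proof.
rewrite /mxform mxE; apply: eq_bigr => j _; rewrite mxE mulr_suml.
by apply: eq_bigr => i _; rewrite mxE.
Qed.

Lemma sqnormE u : sqnorm u = \sum_i u i ord0 ^+ 2.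
Proof. by rewrite /sqnorm mxE; apply: eq_bigr => i _; rewrite mxE expr2. Qed.

Lemma sqnorm_mulmx X v : X^T = X -> sqnorm (X *m v) = mxform X v (X *m v).
Proof. by move=> sX; rewrite /sqnorm /mxform trmx_mul sX mulmxA. Qed.

End MxForm.

Section RealMxForm.
Variables (R : realDomainType) (n : nat).
Implicit Types (M : 'M[R]_n) (u : 'cV[R]_n).

Lemma sqnorm_ge0 u : 0 <= sqnorm u.
Proof. by rewrite sqnormE sumr_ge0 // => i _; rewrite sqr_ge0. Qed.

Lemma coord_sq_le_sqnorm u i : u i ord0 ^+ 2 <= sqnorm u.
Proof. by rewrite sqnormE (bigD1 i) //= lerDl sumr_ge0 // => j _; rewrite sqr_ge0. Qed.

Lemma sqnorm_eq0 u : sqnorm u = 0 -> u = 0.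
Proof.
rewrite sqnormE => /psumr_eq0P u0; apply/colP => i; rewrite mxE.
by apply/eqP; rewrite -sqrf_eq0 u0 // => j _; rewrite sqr_ge0.
Qed.

Lemma mxform_le_sqnorm M : exists2 c, 0 <= c & forall u, mxform M u u <= c * sqnorm u.
Proof.
exists (\sum_j \sum_i `|M i j|); first by apply: sumr_ge0 => j _; apply: sumr_ge0.
move=> u; rewrite mxformE mulr_suml; apply: ler_sum => j _.
rewrite mulr_suml; apply: ler_sum => i _.
exact: mul_le_sq_bound (coord_sq_le_sqnorm u i) (coord_sq_le_sqnorm u j).
Qed.

End RealMxForm.

Section Psd.
Variables (R : realType) (N : nat).
Implicit Types (A B X Y : 'M[R]_N) (u v : 'cV[R]_N).

Lemma psd_cauchy_schwarz X u v :
  psd X -> mxform X u v ^+ 2 <= mxform X u u * mxform X v v.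
Proof.
move=> [sX X_ge0]; apply: quad_ge0_discr => [|t]; first exact: X_ge0.
have := X_ge0 (u + t *: v); rewrite -/(mxform X _ _).
rewrite !(mxformDl, mxformDr, mxformZl, mxformZr) (mxform_sym v u sX); lra.
Qed.

Lemma psd_form_eq0 X v : psd X -> mxform X v v = 0 -> X *m v = 0.
Proof.
move=> psdX Xvv0; apply: sqnorm_eq0; rewrite sqnorm_mulmx; last exact: psdX.1.
apply/eqP; rewrite -sqrf_eq0 eq_le sqr_ge0 andbT.
by have := psd_cauchy_schwarz v (X *m v) psdX; rewrite Xvv0 mul0r.
Qed.

Lemma psdD X Y : psd X -> psd Y -> psd (X + Y).
Proof.
move=> [sX X_ge0] [sY Y_ge0]; split=> [|v]; first by rewrite linearD /= sX sY.
by rewrite -/(mxform _ v v) mxformD addr_ge0 //; [apply: X_ge0 | apply: Y_ge0].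
Qed.

Lemma psdZ a X : 0 <= a -> psd X -> psd (a *: X).
Proof.
move=> a_ge0 [sX X_ge0]; split=> [|v]; first by rewrite linearZ /= sX.
by rewrite -/(mxform _ v v) mxformZ mulr_ge0 //; apply: X_ge0.
Qed.

Lemma psd_sub_addmx X Y : psd X -> psd Y -> (X <= (X + Y)%R)%MS.
Proof.
move=> psdX psdY; apply/submx_kerP => v XYv0; apply: psd_form_eq0 => //.
have : mxform (X + Y) v v = 0 by rewrite /mxform -mulmxA XYv0 mulmx0 mxE.
by rewrite mxformD; have := psdX.2 v; have := psdY.2 v; rewrite -!/(mxform _ v v); lra.
Qed.

Lemma psd_sub_convex a X Y : 0 < a < 1 -> psd X -> psd Y ->
  let Z := a *: X + (1 - a) *: Y in (X <= Z)%MS /\ (Y <= Z)%MS.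
Proof.
move=> /andP[a_gt0 a_lt1] psdX psdY.
have sub_comb (b : R) (U V : 'M[R]_N) :
    0 < b -> psd U -> psd V -> (U <= (b *: U + V)%R)%MS.
  move=> b_gt0 psdU psdV; rewrite -[X in (X <= _)%MS](scalerK (lt0r_neq0 b_gt0)).
  by apply: scalemx_sub; apply: psd_sub_addmx => //; apply: psdZ; rewrite ?ltW.
have b_gt0 : 0 < 1 - a by rewrite subr_gt0.
split; first by apply: sub_comb => //; apply: psdZ; rewrite ?ltW.
by rewrite addrC; apply: sub_comb => //; apply: psdZ; rewrite ?ltW.
Qed.

Lemma psd_sqnorm_mulmx_le A : psd A ->
  exists2 c, 0 <= c & forall v, sqnorm (A *m v) <= c * mxform A v v.
Proof.
move=> psdA; have [c c_ge0 Ac] := mxform_le_sqnorm A; exists c => // v.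
have s_ge0 := sqnorm_ge0 (A *m v); have q_ge0 : 0 <= mxform A v v := psdA.2 v.
have := psd_cauchy_schwarz v (A *m v) psdA.
rewrite -sqnorm_mulmx; last exact: psdA.1.
move/le_trans => /(_ _ (ler_wpM2l q_ge0 (Ac (A *m v)))).
set s := sqnorm _; set q := mxform _ _ _ => le_sq.
have cq_ge0 : 0 <= c * q by exact: mulr_ge0.
rewrite leNgt; apply/negP => lt_s; have s_gt0 := le_lt_trans cq_ge0 lt_s.
by move: le_sq; rewrite expr2 mulrA (mulrC q) ler_pM2r // leNgt lt_s.
Qed.

Lemma psd_dominated A B : psd A -> psd B -> (B <= A)%MS ->
  exists2 c, 0 <= c & forall v, mxform B v v <= c * mxform A v v.
Proof.
move=> psdA [sB _] BA; have sA := psdA.1; set P := pinvmx A.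
have BPA : B *m P *m A = B := mulmxKpV BA.
clearbody P.
have APB : A *m P^T *m B = B by rewrite -[RHS]sB -[in RHS]BPA !trmx_mul sA sB mulmxA.
have BE : B = A^T *m (P^T *m B *m P) *m A by rewrite sA !mulmxA APB BPA.
have [cY cY_ge0 Yc] := mxform_le_sqnorm (P^T *m B *m P).
have [cA cA_ge0 Ac] := psd_sqnorm_mulmx_le psdA.
exists (cY * cA) => [|v]; first exact: mulr_ge0.
rewrite BE mxform_mulmx -mulrA; apply: le_trans (Yc _) _; exact: ler_wpM2l.
Qed.

End Psd.

Section Elliptope.
Variables (R : realType) (N : nat).
Implicit Types (F : set 'M[R]_N) (G W X Y Z : 'M[R]_N).

Lemma calK_convex : mx_convex (@calK R N).
Proof.
move=> X Y [psdX trX] [psdY trY] a /andP[a_ge0 a_le1]; split.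
  by apply: psdD; apply: psdZ; rewrite ?subr_ge0.
by rewrite mxtraceD !mxtraceZ trX trY -mulrDl subrKC mul1r.
Qed.

Lemma calK_face_submx X : is_face (@calK R N) [set Y | calK Y /\ (Y <= X)%MS].
Proof.
split=> [Y [] //|Y Z [KY YX] [KZ ZX] a a01|].
  by split; [exact: calK_convex | rewrite addmx_sub // scalemx_sub].
move=> Y U V a [_ YX] KU KV a01 Y_def.
have [UY VY] := psd_sub_convex a01 KU.1 KV.1; rewrite -Y_def in UY VY.
by split; split=> //; [exact: submx_trans UY YX | exact: submx_trans VY YX].
Qed.

Lemma max_rank_submx F X Z : F `<=` @calK R N -> mx_convex F -> F X -> F Z ->
  (forall Y, F Y -> (\rank Y <= \rank X)%N) -> (Z <= X)%MS.
Proof.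
move=> FK convF FX FZ X_max.
have half01 : 0 < (2^-1 : R) < 1 by rewrite invr_gt0 invf_lt1 ?ltr1n ?ltr0n.
have FM : F (2^-1 *: X + (1 - 2^-1) *: Z).
  by apply: convF => //; case/andP: half01 => /ltW -> /ltW ->.
have [[psdX _] [psdZ _]] := (FK X FX, FK Z FZ).
have [XM ZM] := psd_sub_convex half01 psdX psdZ.
by rewrite (submx_trans ZM) // -(geq_leqif (mxrank_leqif_sup XM)) X_max.
Qed.

Lemma bbG_trace G : bbG G -> \tr G = N%:R.
Proof.
move=> [_ G_diag].
by rewrite /mxtrace (eq_bigr _ (fun mu _ => G_diag mu)) sumr_const card_ord.
Qed.

Lemma calG_extend_beyond X W : calG X -> calG W -> (W <= X)%MS ->
  exists2 a, 0 < a < 1 & exists2 Z, calG Z & X = a *: W + (1 - a) *: Z.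
Proof.
move=> [[sX X_diag] [psdX _]] [[sW W_diag] [psdW _]] WX.
have [c c_ge0 Wc] := psd_dominated psdX psdW WX.
pose a := (c + 2)^-1.
have a_gt0 : 0 < a by rewrite invr_gt0; lra.
have a_lt1 : a < 1 by rewrite invf_lt1; lra.
have ac_le1 : a * c <= 1 by rewrite mulrC ler_pdivrMr; lra.
have a1_neq0 : 1 - a != 0 by rewrite subr_eq0 eq_sym lt_eqF.
pose Z := (1 - a)^-1 *: (X - a *: W).
exists a; first by rewrite a_gt0 a_lt1.
exists Z; last by rewrite /Z scalerA mulfV // scale1r addrC subrK.
have sZ : Z^T = Z by rewrite /Z linearZ linearB linearZ /= sX sW.
have GZ : bbG Z by split=> // mu; rewrite !mxE X_diag W_diag mulr1 mulVf.
split=> //; split; last exact: bbG_trace.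
split=> // v; rewrite -/(mxform Z v v) mxformZ mxformD mxformN mxformZ.
apply: mulr_ge0; first by rewrite invr_ge0 subr_ge0; apply: ltW.
rewrite subr_ge0 (le_trans (ler_wpM2l (ltW a_gt0) (Wc v))) // mulrA ler_piMl //.
exact: psdX.2.
Qed.

End Elliptope.

Theorem lemma2 (R : realType) (N : nat) (F : set 'M[R]_N) :
  @is_face R N (@calG R N) F -> closed F ->
  @face_hull R N F `&` @bbG R N = F.
Proof.
move=> [FG convF extF] _.
apply/seteqP; split=> [W [hullW GW]|X FX]; last first.
  by split; [move=> F' _; apply | exact: (FG X FX).1].
have FK : F `<=` @calK R N by move=> X /FG[].
have [F0|/set0P F_neq0] := eqVneq F set0.
  have face0 : is_face (@calK R N) set0 by split=> [x []|x y []|x y z a []].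
  by rewrite F0; apply: (hullW _ face0); rewrite F0.
have [X FX X_max] := exists_bounded_argmax F_neq0 (fun X _ => rank_leq_col X).
have [KW WX] : calK W /\ (W <= X)%MS.
  apply: hullW (calK_face_submx X) _ => Z FZ.
  by split; [exact: FK | exact: max_rank_submx FX FZ X_max].
have [a a01 [Z GZ X_def]] := calG_extend_beyond (FG X FX) (conj GW KW) WX.
by have [] := extF X W Z a FX (conj GW KW) GZ a01 X_def.
Qed.
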